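(* (a) Let $B^L$ be a segment of the left boundary of $S_{slit}$ (oriented either way), and suppose $K_1$ extends continuously to $B^L$ with $K_1(z_1)\in e^{-i\pi/4}\mathbb R$ for all $z_1\in B^L$. Then for every $z_2\in S_{slit}$, $$\int_{B^L}\big(\mathcal K^{\circ\circ}_{K_1,K_2}(z_1,z_2)\,dz_1+\mathcal K^{\bullet\circ}_{K_1,K_2}(z_1,z_2)\,d\bar z_1\big)=0,\qquad\int_{B^L}\big(\mathcal K^{\circ\bullet}_{K_1,K_2}(z_1,z_2)\,dz_1+\mathcal K^{\bullet\bullet}_{K_1,K_2}(z_1,z_2)\,d\bar z_1\big)=0.$$ (b) Let $B^R$ be a segment of the right boundary of $S_{slit}$, and suppose $K_1$ extends continuously to $B^R$ with $K_1(z_1)\in e^{i\pi/4}\mathbb R$ for all $z_1\in B^R$. Then for every $z_2\in S_{slit}$ the same two integrals over $B^R$ vanish.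
   Context: $S=\{z\in\mathbb C:-\frac12<\mathrm{Re}\,z<\frac12\}$ and $S_{slit}=S\setminus\{iy:y\le0\}$. Each point $iy$, $y<0$, of the slit gives two prime ends $0^-+iy$ (seen from $\mathrm{Re}\,z<0$) and $0^++iy$ (seen from $\mathrm{Re}\,z>0$). The left boundary of $S_{slit}$ is $\{-\frac12+iy:y\in\mathbb R\}\cup\{0^++iy:y<0\}$ and the right boundary is $\{\frac12+iy:y\in\mathbb R\}\cup\{0^-+iy:y<0\}$. $\varphi:S_{slit}\to\mathbb H$ is the conformal map onto the upper half-plane sending the top extremity ($\mathrm{Im}\,z\to+\infty$) to $\infty$, the bottom-left extremity to $-\frac12$ and the bottom-right extremity to $+\frac12$ (explicitly $\varphi(z)=\frac12\sqrt{1-e^{-2\pi iz}}$ for a suitable branch); it extends analytically to the boundary arcs. Fix a continuous branch of $\sqrt{\varphi'}$. For functions $K_1,K_2$ defined at $z_1,z_2$ respectively (bars denote complex conjugation): $\mathcal K^{\circ\circ}_{K_1,K_2}(z_1,z_2)=\frac{K_1(z_1)\sqrt{\varphi'(z_1)}\,K_2(z_2)\sqrt{\varphi'(z_2)}}{\varphi(z_1)-\varphi(z_2)}$, $\mathcal K^{\circ\bullet}_{K_1,K_2}=\frac{K_1(z_1)\sqrt{\varphi'(z_1)}\,\overline{K_2(z_2)\sqrt{\varphi'(z_2)}}}{\varphi(z_1)-\overline{\varphi(z_2)}}$, $\mathcal K^{\bullet\circ}_{K_1,K_2}=\frac{\overline{K_1(z_1)\sqrt{\varphi'(z_1)}}\,K_2(z_2)\sqrt{\varphi'(z_2)}}{\overline{\varphi(z_1)}-\varphi(z_2)}$,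 $\mathcal K^{\bullet\bullet}_{K_1,K_2}=\frac{\overline{K_1(z_1)\sqrt{\varphi'(z_1)}}\,\overline{K_2(z_2)\sqrt{\varphi'(z_2)}}}{\overline{\varphi(z_1)}-\overline{\varphi(z_2)}}$. *)

From Stdlib Require Import Reals.
From Coquelicot Require Import Coquelicot.
Open Scope R_scope.

Definition cexp (z : C) : C :=
  (exp (Re z) * cos (Im z), exp (Re z) * sin (Im z)).

(* principal square root: cut along (-oo,0], values with Re >= 0
   (for z on the cut, value i*sqrt|z|) *)
Definition csqrt (z : C) : C :=
  (sqrt ((Cmod z + Re z) / 2),
   (if Rle_dec 0 (Im z) then 1 else -1) * sqrt ((Cmod z - Re z) / 2)).

Definition Ci : C := (0, 1).

Definition S_slit (z : C) : Prop :=
  -1/2 < Re z < 1/2 /\ ~ (Re z = 0 /\ Im z <= 0).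

(* phi(z) = 1/2 sqrt(1 - e^{-2 pi i z}) with the branch valued in the upper
   half-plane, i.e. sqrt_H(w) = i * sqrt_principal(-w). *)
Definition phi (z : C) : C :=
  Cmult (Cmult Ci (/2, 0)) (csqrt (Cminus (cexp (Cmult (0, -2 * PI) z)) 1)).

(* the four kernels, written in terms of a_j = K_j(z_j) sqrt(phi'(z_j)) and
   p_j = phi(z_j) *)
Definition Koo (a1 p1 a2 p2 : C) : C := Cdiv (Cmult a1 a2) (Cminus p1 p2).
Definition Kob (a1 p1 a2 p2 : C) : C :=
  Cdiv (Cmult a1 (Cconj a2)) (Cminus p1 (Cconj p2)).
Definition Kbo (a1 p1 a2 p2 : C) : C :=
  Cdiv (Cmult (Cconj a1) a2) (Cminus (Cconj p1) p2).
Definition Kbb (a1 p1 a2 p2 : C) : C :=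
  Cdiv (Cmult (Cconj a1) (Cconj a2)) (Cminus (Cconj p1) (Cconj p2)).

Definition in_seg (a b y : R) : Prop := Rmin a b <= y <= Rmax a b.

(* The closed vertical segment { x0 + i y : y between a and b } is a segment of
   the LEFT boundary of S_slit: either on the line Re z = -1/2, or on the slit
   side 0^+ (points i y, y < 0, seen from Re z > 0). *)
Definition left_boundary_seg (x0 a b : R) : Prop :=
  x0 = -1/2 \/ (x0 = 0 /\ a < 0 /\ b < 0).
(* RIGHT boundary: the line Re z = 1/2, or the slit side 0^- (seen from Re z < 0). *)
Definition right_boundary_seg (x0 a b : R) : Prop :=
  x0 = 1/2 \/ (x0 = 0 /\ a < 0 /\ b < 0).

(* Points of S_slit near the left (resp. right) boundary point x0 + i y are
   those with Re z > x0 (resp. Re z < x0). *)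
Definition side_left (x0 : R) (z : C) : Prop := S_slit z /\ x0 < Re z.
Definition side_right (x0 : R) (z : C) : Prop := S_slit z /\ Re z < x0.

(* [fB] gives the values of the continuous extension of [f] (defined on S_slit)
   to the boundary segment {x0 + i y : y in seg a b}, the boundary points being
   approached from the side [D]: f(z) -> fB y as z -> x0 + i y within D, and the
   extended function is continuous along the segment. *)
Definition cont_ext (D : C -> Prop) (f : C -> C) (fB : R -> C) (x0 a b : R) : Prop :=
  forall y, in_seg a b y ->
    filterlim f (within D (locally ((x0, y) : C))) (locally (fB y)) /\
    filterlim fB (within (in_seg a b) (locally y)) (locally (fB y)).

Definition on_line (theta : R) (c : C) : Prop :=
  exists t : R, c = Cmult (RtoC t) (cexp (0, theta)).

Definition sqrt_dphi_branch (dphi s : C -> C) : Prop :=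
  (forall z, S_slit z -> @is_derive C_AbsRing C_NormedModule phi z (dphi z)) /\
  (forall z, S_slit z -> Cmult (s z) (s z) = dphi z) /\
  (forall z, S_slit z -> filterlim s (within S_slit (locally z)) (locally (s z))).

(* The integrands of the two integrals, along z1 = x0 + i y:
   dz1 = i dy, d(conj z1) = -i dy. Here a1 = K1(z1) sqrt(phi'(z1)), p1 = phi(z1)
   (boundary values), a2 = K2(z2) sqrt(phi'(z2)), p2 = phi(z2). *)
Definition integrand1 (a1 p1 a2 p2 : C) : C :=
  Cplus (Cmult (Koo a1 p1 a2 p2) Ci) (Cmult (Kbo a1 p1 a2 p2) (Copp Ci)).
Definition integrand2 (a1 p1 a2 p2 : C) : C :=
  Cplus (Cmult (Kob a1 p1 a2 p2) Ci) (Cmult (Kbb a1 p1 a2 p2) (Copp Ci)).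

(* On every piece of the boundary of S_slit the boundary values of phi are real and those of
   sqrt(phi') lie on e^{i pi/4} R (left boundary) or e^{-i pi/4} R (right boundary).  Hence
   a1 = K1 sqrt(phi') and p1 = phi are real there, the kernels K°° and K•° (resp. K°• and K••)
   coincide, and with dz1 = i dy, dz1bar = -i dy both integrands vanish pointwise.
   The boundary values are read off from the identities 4 phi^2 = 1 - e^{-2 pi i z} and
   4 phi' phi = pi i e^{-2 pi i z}, which pass to the limit at a boundary point z0 where
   e^{-2 pi i z0} is real and < 1: phi(z0) is then real and nonzero and sqrt(phi')(z0)^2 is
   purely imaginary.  Which of its two square-root lines occurs is decided by the sign of
   Re phi on the side of approach, which is that of sin (2 pi Re z). *)

From Stdlib Require Import Reals Lra.
From Coquelicot Require Import Coquelicot.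
Open Scope R_scope.

(** * Complex square roots and lines through the origin *)

Lemma csqrt_sqr (w : C) : (csqrt w * csqrt w)%C = w.
Proof.
  destruct w as [a b]. unfold csqrt, Re, Im. simpl fst; simpl snd.
  set (m := Cmod (a, b)).
  assert (Hm : m ^ 2 = a ^ 2 + b ^ 2) by apply Cmod2_alt.
  assert (Ham : Rabs a <= m) by apply (re_le_Cmod (a, b)).
  pose proof (Rle_abs a). pose proof (Rle_abs (- a)). rewrite Rabs_Ropp in *.
  assert (Hu : sqrt ((m + a) / 2) * sqrt ((m + a) / 2) = (m + a) / 2)
    by (apply sqrt_sqrt; lra).
  assert (Hv : sqrt ((m - a) / 2) * sqrt ((m - a) / 2) = (m - a) / 2)
    by (apply sqrt_sqrt; lra).
  assert (Huv : sqrt ((m + a) / 2) * sqrt ((m - a) / 2) = Rabs b / 2).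
  { rewrite <- sqrt_mult by lra.
    replace ((m + a) / 2 * ((m - a) / 2)) with (Rsqr (b / 2)) by (unfold Rsqr; nra).
    rewrite sqrt_Rsqr_abs, Rabs_div by lra. rewrite (Rabs_right 2) by lra. reflexivity. }
  unfold Cmult; simpl fst; simpl snd. f_equal.
  - destruct (Rle_dec 0 b); nra.
  - destruct (Rle_dec 0 b); [rewrite Rabs_right in Huv | rewrite Rabs_left in Huv]; lra.
Qed.

Lemma Ci_sqr : (Ci * Ci = - 1)%C.
Proof. apply injective_projections; simpl; ring. Qed.

Lemma im_mul_im_csqrt_nonneg (w : C) : 0 <= Im w * Im (csqrt w).
Proof.
  unfold csqrt, Im at 2; simpl.
  pose proof (sqrt_pos ((Cmod w - Re w) / 2)).
  destruct (Rle_dec 0 (Im w)); nra.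
Qed.

Lemma on_line_PI4_of_sqr (c : C) : Re (c * c) = 0 -> 0 <= Im (c * c) -> on_line (PI / 4) c.
Proof.
  destruct c as [p q]. unfold Re, Im; simpl. intros Hre Him.
  assert (Hq : q = p).
  { assert (H : (p - q) * (p + q) = 0) by lra.
    destruct (Rmult_integral _ _ H); nra. }
  subst q.
  exists (p * sqrt 2). unfold cexp, Cmult, RtoC, Re, Im; simpl.
  rewrite exp_0, cos_PI4, sin_PI4.
  assert (sqrt 2 <> 0) by (apply Rgt_not_eq, sqrt_lt_R0; lra).
  apply injective_projections; simpl; field; assumption.
Qed.

Lemma on_line_neg_PI4_of_sqr (c : C) : Re (c * c) = 0 -> Im (c * c) <= 0 -> on_line (- (PI / 4)) c.
Proof.
  destruct c as [p q]. unfold Re, Im; simpl. intros Hre Him.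
  assert (Hq : q = - p).
  { assert (H : (p - q) * (p + q) = 0) by lra.
    destruct (Rmult_integral _ _ H); nra. }
  subst q.
  exists (p * sqrt 2). unfold cexp, Cmult, RtoC, Re, Im; simpl.
  rewrite exp_0, cos_neg, sin_neg, cos_PI4, sin_PI4.
  assert (sqrt 2 <> 0) by (apply Rgt_not_eq, sqrt_lt_R0; lra).
  apply injective_projections; simpl; field; assumption.
Qed.

Lemma on_line_mul_opp_im (theta : R) (a b : C) :
  on_line theta a -> on_line (- theta) b -> Im (a * b) = 0.
Proof.
  intros [t ->] [t' ->]. unfold cexp, Cmult, RtoC, Re, Im; simpl.
  rewrite cos_neg, sin_neg. ring.
Qed.

(** * The map phi *)

Definition ephase (z : C) : C := cexp (Cmult (0, -2 * PI) z).

Lemma ephase_eq (x y : R) :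
  ephase (x, y) = (exp (2 * PI * y) * cos (2 * PI * x), - (exp (2 * PI * y) * sin (2 * PI * x))).
Proof.
  unfold ephase, cexp, Cmult, Re, Im; simpl fst; simpl snd.
  replace (0 * x - -2 * PI * y) with (2 * PI * y) by ring.
  replace (0 * y + -2 * PI * x) with (- (2 * PI * x)) by ring.
  rewrite cos_neg, sin_neg. f_equal; ring.
Qed.

Lemma phi_sqr (z : C) : (4 * (phi z * phi z) = 1 - ephase z)%C.
Proof.
  change (phi z) with (Ci * RtoC (/ 2) * csqrt (ephase z - 1))%C.
  replace (4 * (Ci * RtoC (/ 2) * csqrt (ephase z - 1) * (Ci * RtoC (/ 2) * csqrt (ephase z - 1))))%C
    with (Ci * Ci * RtoC (4 * / 2 * / 2) * (csqrt (ephase z - 1) * csqrt (ephase z - 1)))%C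
    by (rewrite !RtoC_mult; ring).
  rewrite Ci_sqr, csqrt_sqr. replace (4 * / 2 * / 2) with 1 by field. ring.
Qed.

Lemma phi_sqr_re_im (x y : R) :
  4 * (Re (phi (x, y)) * Re (phi (x, y)) - Im (phi (x, y)) * Im (phi (x, y)))
    = 1 - exp (2 * PI * y) * cos (2 * PI * x) /\
  4 * (2 * (Re (phi (x, y)) * Im (phi (x, y)))) = exp (2 * PI * y) * sin (2 * PI * x).
Proof.
  pose proof (phi_sqr (x, y)) as Hsqr. rewrite ephase_eq in Hsqr.
  unfold Re, Im. destruct (phi (x, y)) as [u v].
  split; [apply (f_equal fst) in Hsqr | apply (f_equal snd) in Hsqr]; simpl in Hsqr |- *; lra.
Qed.

Lemma sin_mul_re_phi_nonneg (z : C) : 0 <= sin (2 * PI * Re z) * Re (phi z).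
Proof.
  destruct z as [x y]. unfold Re at 1; simpl fst.
  set (w := (ephase (x, y) - 1)%C).
  assert (Hre : Re (phi (x, y)) = - Im (csqrt w) / 2).
  { change (phi (x, y)) with (Ci * RtoC (/ 2) * csqrt w)%C.
    destruct (csqrt w) as [a b]. unfold Re, Im; simpl. field. }
  assert (Him : Im w = - (exp (2 * PI * y) * sin (2 * PI * x))).
  { unfold w, Cminus. rewrite im_plus, ephase_eq. simpl. ring. }
  pose proof (im_mul_im_csqrt_nonneg w) as Hsign. rewrite Him in Hsign.
  pose proof (exp_pos (2 * PI * y)) as HE.
  rewrite Hre.
  replace (sin (2 * PI * x) * (- Im (csqrt w) / 2))
    with (/ (2 * exp (2 * PI * y)) * (- (exp (2 * PI * y) * sin (2 * PI * x)) * Im (csqrt w)))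
    by (field; lra).
  apply Rmult_le_pos; [apply Rlt_le, Rinv_0_lt_compat; lra | exact Hsign].
Qed.

Lemma cos_mul_re_phi_sign (x0 : R) (z : C) :
  sin (2 * PI * x0) = 0 ->
  0 <= sin (2 * PI * (Re z - x0)) * (cos (2 * PI * x0) * Re (phi z)).
Proof.
  intros Hsin.
  replace (2 * PI * (Re z - x0)) with (2 * PI * Re z - 2 * PI * x0) by ring.
  rewrite sin_minus, Hsin.
  replace ((sin (2 * PI * Re z) * cos (2 * PI * x0) - cos (2 * PI * Re z) * 0)
             * (cos (2 * PI * x0) * Re (phi z)))
    with (cos (2 * PI * x0) ^ 2 * (sin (2 * PI * Re z) * Re (phi z))) by ring.
  apply Rmult_le_pos; [apply pow2_ge_0 | apply sin_mul_re_phi_nonneg].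
Qed.

Lemma im_le_Cmod (c : C) : Rabs (Im c) <= Cmod c.
Proof. eapply Rle_trans; [apply Rmax_r | apply Rmax_Cmod]. Qed.

Lemma is_derive_of_estimate (g : R -> R) (x l : R) :
  (forall eps : posreal, exists delta : posreal, forall h, Rabs h < delta ->
     Rabs (g (x + h) - g x - h * l) <= eps * Rabs h) ->
  is_derive g x l.
Proof.
  intros Hest. apply is_derive_Reals. intros eps Heps.
  destruct (Hest (mkposreal (eps / 2) ltac:(lra))) as [delta Hdelta]. simpl in Hdelta.
  exists delta. intros h Hh0 Hh.
  assert (Hh1 : 0 < Rabs h) by (apply Rabs_pos_lt; exact Hh0).
  replace ((g (x + h) - g x) / h - l) with ((g (x + h) - g x - h * l) / h) by (field; exact Hh0).
  rewrite Rabs_div by exact Hh0. apply Rlt_div_l; [exact Hh1|].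
  specialize (Hdelta h Hh). nra.
Qed.

Lemma is_derive_horizontal_estimate (f : C -> C) (x y : R) (D : C) :
  @is_derive C_AbsRing C_NormedModule f (x, y) D ->
  forall eps : posreal, exists delta : posreal, forall h, Rabs h < delta ->
    Cmod (f ((x + h)%R, y) - f (x, y) - h * D)%C <= eps * Rabs h.
Proof.
  intros [_ Hdomin] eps.
  destruct (Hdomin (x, y) (fun P HP => HP) eps) as [delta Hdelta].
  exists delta. intros h Hh.
  assert (Eh : Cminus ((x + h)%R, y) (x, y) = RtoC h).
  { apply injective_projections; simpl; ring. }
  assert (Hball : Cmod (Cminus ((x + h)%R, y) (x, y)) < delta) by (rewrite Eh, Cmod_R; exact Hh).
  specialize (Hdelta ((x + h)%R, y) Hball).
  change (Cmod (f ((x + h)%R, y) - f (x, y) - Cminus ((x + h)%R, y) (x, y) * D)%C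
          <= eps * Cmod (Cminus ((x + h)%R, y) (x, y))) in Hdelta.
  rewrite Eh, Cmod_R in Hdelta. exact Hdelta.
Qed.

Lemma is_derive_re_im_horizontal (f : C -> C) (x y : R) (D : C) :
  @is_derive C_AbsRing C_NormedModule f (x, y) D ->
  is_derive (fun t : R => Re (f (t, y))) x (Re D) /\
  is_derive (fun t : R => Im (f (t, y))) x (Im D).
Proof.
  intros Hf.
  split; apply is_derive_of_estimate; intros eps;
    destruct (is_derive_horizontal_estimate f x y D Hf eps) as [delta Hdelta];
    exists delta; intros h Hh; refine (Rle_trans _ _ _ _ (Hdelta h Hh)).
  - pose proof (re_le_Cmod (f ((x + h)%R, y) - f (x, y) - h * D)%C) as Hre.
    unfold Cminus in Hre. rewrite !re_plus, !re_opp, re_scal_l in Hre.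
    replace (Re (f (x + h, y)) - Re (f (x, y)) - h * Re D)
      with (Re (f (x + h, y)) + - Re (f (x, y)) + - (h * Re D)) by ring.
    exact Hre.
  - pose proof (im_le_Cmod (f ((x + h)%R, y) - f (x, y) - h * D)%C) as Him.
    unfold Cminus in Him. rewrite !im_plus, !im_opp, im_scal_l in Him.
    replace (Im (f (x + h, y)) - Im (f (x, y)) - h * Im D)
      with (Im (f (x + h, y)) + - Im (f (x, y)) + - (h * Im D)) by ring.
    exact Him.
Qed.

Lemma is_derive_sqr_re_im (fr fi A B : R -> R) (x p q a b : R) :
  is_derive fr x p -> is_derive fi x q -> is_derive A x a -> is_derive B x b ->
  (forall t, fr t * fr t - fi t * fi t = A t) -> (forall t, 2 * (fr t * fi t) = B t) ->
  2 * (p * fr x - q * fi x) = a /\ 2 * (p * fi x + q * fr x) = b.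
Proof.
  intros Hr Hi HA HB EA EB.
  pose proof (is_derive_mult fr fr x p p Hr Hr Rmult_comm) as Hrr.
  pose proof (is_derive_mult fi fi x q q Hi Hi Rmult_comm) as Hii.
  pose proof (is_derive_mult fr fi x p q Hr Hi Rmult_comm) as Hri.
  pose proof (is_derive_ext _ _ x _ EA (is_derive_minus _ _ x _ _ Hrr Hii)) as HA'.
  pose proof (is_derive_ext _ _ x _ EB (is_derive_scal _ x 2 _ Hri)) as HB'.
  rewrite <- (is_derive_unique _ _ _ HA), <- (is_derive_unique _ _ _ HB),
    (is_derive_unique _ _ _ HA'), (is_derive_unique _ _ _ HB').
  unfold minus, plus, opp, mult, scal; simpl. unfold mult; simpl. split; ring.
Qed.

(* Differentiating 4 phi^2 = 1 - e^{-2 pi i z} along the horizontal line through z is enough: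
   the identity holds on the whole line, and the x-derivative of a holomorphic function is its
   complex derivative. *)
Lemma dphi_mul_phi (z D : C) :
  @is_derive C_AbsRing C_NormedModule phi z D -> (4 * (D * phi z) = Ci * PI * ephase z)%C.
Proof.
  destruct z as [x y]. intros Hd.
  destruct (is_derive_re_im_horizontal phi x y D Hd) as [Hre Him].
  set (E := exp (2 * PI * y)).
  assert (HA : is_derive (fun t => (1 - E * cos (2 * PI * t)) / 4) x (PI / 2 * E * sin (2 * PI * x)))
    by (auto_derive; [exact I | field]).
  assert (HB : is_derive (fun t => E * sin (2 * PI * t) / 4) x (PI / 2 * E * cos (2 * PI * x)))
    by (auto_derive; [exact I | field]).
  destruct (is_derive_sqr_re_im _ _ _ _ x _ _ _ _ Hre Him HA HB) as [H1 H2].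
  - intro t. destruct (phi_sqr_re_im t y) as [Ht _]. fold E in Ht. cbv beta. lra.
  - intro t. destruct (phi_sqr_re_im t y) as [_ Ht]. fold E in Ht. cbv beta. lra.
  - rewrite ephase_eq. fold E. unfold Re, Im in H1, H2.
    destruct (phi (x, y)) as [u v], D as [p q]. simpl in H1, H2.
    apply injective_projections; simpl; lra.
Qed.

Section ComplexLimits.

Context {T : Type} (F : (T -> Prop) -> Prop) {FF : Filter F}.

Lemma filterlim_Cplus (f g : T -> C) (l m : C) :
  filterlim f F (locally l) -> filterlim g F (locally m) ->
  filterlim (fun t => f t + g t)%C F (locally (l + m)%C).
Proof.
  intros Hf Hg.
  exact (filterlim_comp_2 f g Cplus Hf Hg (@filterlim_plus C_AbsRing C_NormedModule l m)).
Qed.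

Lemma filterlim_Copp (f : T -> C) (l : C) :
  filterlim f F (locally l) -> filterlim (fun t => - f t)%C F (locally (- l)%C).
Proof.
  intros Hf. exact (filterlim_comp _ _ _ f Copp F _ _ Hf (@filterlim_opp C_AbsRing C_NormedModule l)).
Qed.

(* [filterlim_mult] lives in the absolute-value uniformity of [C_AbsRing]; [locally_C]
   transfers it to the product uniformity of [C]. *)

Lemma filterlim_Cmult (f g : T -> C) (l m : C) :
  filterlim f F (locally l) -> filterlim g F (locally m) ->
  filterlim (fun t => f t * g t)%C F (locally (l * m)%C).
Proof.
  intros Hf Hg. apply (filterlim_comp_2 f g Cmult Hf Hg).
  intros P HP. apply locally_C in HP.
  destruct (filterlim_mult (K := C_AbsRing) l m P HP) as [Q R HQ HR HQR].
  exists Q R; try apply locally_C; assumption.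
Qed.

Lemma filterlim_Re (f : T -> C) (l : C) :
  filterlim f F (locally l) -> filterlim (fun t => Re (f t)) F (locally (Re l)).
Proof.
  intros Hf. destruct l as [a b].
  exact (filterlim_comp _ _ _ f fst F _ _ Hf (continuous_fst a b)).
Qed.

Lemma filterlim_unique_eventually (f g : T -> C) (l m : C) :
  ProperFilter' F -> F (fun t => f t = g t) ->
  filterlim f F (locally l) -> filterlim g F (locally m) -> l = m.
Proof.
  intros HF Hfg Hf Hg. apply (filterlim_ext_loc f g Hfg) in Hf.
  exact (@filterlim_locally_unique T C_AbsRing C_NormedModule F HF g l m Hf Hg).
Qed.

Lemma filterlim_Re_scal_nonneg (f : T -> C) (c : R) (l : C) :
  ProperFilter' F -> F (fun t => 0 <= c * Re (f t)) ->
  filterlim f F (locally l) -> 0 <= c * Re l.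
Proof.
  intros HF Hpos Hf. rewrite <- re_scal_l.
  apply (filterlim_Cmult (fun _ => RtoC c) f c l (filterlim_const _)) in Hf.
  apply filterlim_Re in Hf.
  apply (@filterlim_le T F HF (fun _ => 0) (fun t => Re (c * f t)) 0 (Re (c * l))).
  - apply (filter_imp _ _ (fun t Ht => eq_ind_r (fun r => 0 <= r) Ht (re_scal_l c (f t))) Hpos).
  - apply filterlim_const.
  - exact Hf.
Qed.

End ComplexLimits.

Lemma continuous_C_re_im {U : UniformSpace} (f : U -> C) (u : U) :
  continuous (fun v => Re (f v)) u -> continuous (fun v => Im (f v)) u -> continuous f u.
Proof.
  intros Hre Him P [eps HP]. unfold filtermap.
  apply (filter_imp (fun v => ball (Re (f u)) eps (Re (f v)) /\ ball (Im (f u)) eps (Im (f v)))).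
  - intros v Hv. apply HP. exact Hv.
  - apply filter_and; [apply Hre | apply Him]; apply locally_ball.
Qed.

Lemma continuous_exp_trig (tau : R -> R) (x y : R) :
  (forall t, continuous tau t) ->
  continuous (fun w : C => exp (2 * PI * Im w) * tau (2 * PI * Re w)) (x, y).
Proof.
  intros Htau.
  apply (continuous_mult (K := R_AbsRing) (fun w : C => exp (2 * PI * Im w)) (fun w : C => tau (2 * PI * Re w))).
  - apply (continuous_comp (fun w : C => Im w) (fun t => exp (2 * PI * t))).
    + apply continuous_snd.
    + apply (@ex_derive_continuous R_AbsRing R_NormedModule). auto_derive. exact I.
  - apply (continuous_comp (fun w : C => Re w) (fun t => tau (2 * PI * t))).
    + apply continuous_fst.
    + apply (continuous_comp (fun t => 2 * PI * t) tau); [| apply Htau].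
      apply (@ex_derive_continuous R_AbsRing R_NormedModule). auto_derive. exact I.
Qed.

Lemma continuous_ephase (z : C) : continuous ephase z.
Proof.
  destruct z as [x y].
  assert (Hw : forall w : C, ephase w = (exp (2 * PI * Im w) * cos (2 * PI * Re w),
                                       - (exp (2 * PI * Im w) * sin (2 * PI * Re w))))
    by (intros [a b]; apply ephase_eq).
  apply continuous_C_re_im.
  - apply (continuous_ext (fun w : C => exp (2 * PI * Im w) * cos (2 * PI * Re w))).
    + intro w. rewrite Hw. reflexivity.
    + apply continuous_exp_trig. intro t. apply continuous_cos.
  - apply (continuous_ext (fun w : C => - (exp (2 * PI * Im w) * sin (2 * PI * Re w)))).
    + intro w. rewrite Hw. reflexivity.
    + apply (continuous_opp (V := R_NormedModule)). apply continuous_exp_trig. intro t. apply continuous_sin.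
Qed.

(** * Boundary values of phi and sqrt(phi') *)

Section BoundaryValues.

Variables (dphi s : C -> C) (D : C -> Prop) (z0 sB pB : C).
Local Notation F := (within D (locally z0)).
Hypothesis Hbranch : sqrt_dphi_branch dphi s.
Hypothesis HD : forall z, D z -> S_slit z.
Hypothesis HF : ProperFilter' F.
Hypothesis Hs : filterlim s F (locally sB).
Hypothesis Hphi : filterlim phi F (locally pB).

#[local] Instance within_filter_z0 : Filter F := @filter_filter' _ _ HF.

Lemma filterlim_within_ephase : filterlim ephase F (locally (ephase z0)).
Proof.
  apply (filterlim_comp _ _ _ (fun z => z) ephase _ (locally z0)).
  - exact (filter_le_within D).
  - apply continuous_ephase.
Qed.

Lemma boundary_phi_sqr : (4 * (pB * pB) = 1 - ephase z0)%C.
Proof.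
  apply (filterlim_unique_eventually F (fun z => 4 * (phi z * phi z)) (fun z => 1 - ephase z))%C.
  - exact HF.
  - apply filter_forall. intro z. apply phi_sqr.
  - apply (filterlim_Cmult F); [apply filterlim_const | apply (filterlim_Cmult F); exact Hphi].
  - apply (filterlim_Cplus F); [apply filterlim_const |].
    apply (filterlim_Copp F), filterlim_within_ephase.
Qed.

Lemma boundary_sqrt_dphi_sqr : (4 * (sB * sB * pB) = Ci * PI * ephase z0)%C.
Proof.
  destruct Hbranch as [Hder [Hsqr _]].
  apply (filterlim_unique_eventually F (fun z => 4 * (s z * s z * phi z)) (fun z => Ci * PI * ephase z))%C.
  - exact HF.
  - unfold within. apply filter_forall. intros z Hz. rewrite Hsqr by (apply HD; exact Hz).
    apply dphi_mul_phi, Hder, HD, Hz.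
  - apply (filterlim_Cmult F); [apply filterlim_const |].
    apply (filterlim_Cmult F); [apply (filterlim_Cmult F) |]; assumption.
  - apply (filterlim_Cmult F); [apply filterlim_const | apply filterlim_within_ephase].
Qed.

End BoundaryValues.

Lemma solve_boundary_identities (pB sB : C) (k : R) :
  (4 * (pB * pB) = 1 - RtoC k)%C -> k < 1 -> k <> 0 ->
  (4 * (sB * sB * pB) = Ci * PI * RtoC k)%C ->
  Im pB = 0 /\ Re (sB * sB) = 0 /\ 0 < k * Re pB * Im (sB * sB).
Proof.
  destruct pB as [u v], sB as [p q]. intros Hp Hk1 Hk0 Hs.
  pose proof (f_equal fst Hp) as Hp1. pose proof (f_equal snd Hp) as Hp2.
  pose proof (f_equal fst Hs) as Hs1. pose proof (f_equal snd Hs) as Hs2.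
  simpl in Hp1, Hp2, Hs1, Hs2. unfold Re, Im; simpl.
  assert (Hu : u <> 0) by (intros ->; nra).
  assert (Hv : v = 0) by (apply (Rmult_eq_reg_l u); [nra | exact Hu]).
  subst v.
  assert (Hpq : p * p - q * q = 0) by (apply (Rmult_eq_reg_r u); [nra | exact Hu]).
  split; [reflexivity | split; [lra |]].
  replace (k * u * (p * q + q * p)) with (PI * (k * k) / 4) by nra.
  pose proof PI_RGT_0. assert (0 < k * k) by nra. apply Rdiv_lt_0_compat; nra.
Qed.

Lemma sin_cos_at_boundary (x0 y : R) :
  x0 = -1/2 \/ x0 = 1/2 \/ (x0 = 0 /\ y < 0) ->
  sin (2 * PI * x0) = 0 /\ cos (2 * PI * x0) * exp (2 * PI * y) < 1.
Proof.
  pose proof PI_RGT_0. pose proof (exp_pos (2 * PI * y)).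
  intros [-> | [-> | [-> Hy]]].
  - replace (2 * PI * (-1/2)) with (- PI) by field.
    rewrite sin_neg, cos_neg, sin_PI, cos_PI. split; lra.
  - replace (2 * PI * (1/2)) with PI by field.
    rewrite sin_PI, cos_PI. split; lra.
  - rewrite Rmult_0_r, sin_0, cos_0. split; [reflexivity |].
    rewrite Rmult_1_l, <- exp_0. apply exp_increasing. nra.
Qed.

Lemma proper_within_horizontal (D : C -> Prop) (x0 y sigma : R) :
  sigma = 1 \/ sigma = -1 ->
  (forall d, 0 < d < 1/4 -> D (x0 + sigma * d, y)) ->
  ProperFilter' (within D (locally ((x0, y) : C))).
Proof.
  intros Hsigma Happroach. constructor; [| apply within_filter, locally_filter].
  intros [eps Hball]. pose proof (cond_pos eps) as Heps.
  set (d := Rmin (eps / 2) (1/8)).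
  assert (Hd : 0 < d <= eps / 2 /\ d <= 1/8)
    by (unfold d; split; [split; [apply Rmin_glb_lt |apply Rmin_l] | apply Rmin_r]; lra).
  apply (Hball (x0 + sigma * d, y)); [| apply Happroach; lra].
  split; unfold ball; simpl; unfold AbsRing_ball, abs, minus, plus, opp; simpl.
  - replace (x0 + sigma * d + - x0) with (sigma * d) by ring.
    destruct Hsigma as [-> | ->]; [rewrite Rabs_right | rewrite Rabs_left]; lra.
  - rewrite Rplus_opp_r, Rabs_R0. exact Heps.
Qed.

Lemma boundary_values (dphi s : C -> C) (D : C -> Prop) (x0 y sigma : R) (sB pB : C) :
  sqrt_dphi_branch dphi s ->
  x0 = -1/2 \/ x0 = 1/2 \/ (x0 = 0 /\ y < 0) ->
  sigma = 1 \/ sigma = -1 ->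
  (forall z, D z -> S_slit z /\ 0 < sigma * (Re z - x0)) ->
  (forall d, 0 < d < 1/4 -> D (x0 + sigma * d, y)) ->
  filterlim s (within D (locally ((x0, y) : C))) (locally sB) ->
  filterlim phi (within D (locally ((x0, y) : C))) (locally pB) ->
  Im pB = 0 /\ Re (sB * sB) = 0 /\ 0 < sigma * Im (sB * sB).
Proof.
  intros Hbranch Hx0 Hsigma HD Happroach Hs Hphi.
  destruct (sin_cos_at_boundary x0 y Hx0) as [Hsin Hcos].
  pose proof (proper_within_horizontal D x0 y sigma Hsigma Happroach) as HF.
  assert (HDS : forall z, D z -> S_slit z) by (intros z Hz; apply HD, Hz).
  set (c := cos (2 * PI * x0)). set (E := exp (2 * PI * y)).
  assert (HE : 0 < E) by apply exp_pos.
  assert (Hc : c * c = 1)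
    by (pose proof (sin2_cos2 (2 * PI * x0)) as H; rewrite Hsin in H; unfold Rsqr in H; fold c in H; lra).
  assert (Hphase : ephase (x0, y) = RtoC (c * E)).
  { rewrite ephase_eq, Hsin. apply injective_projections; simpl; unfold c, E; ring. }
  destruct (solve_boundary_identities pB sB (c * E)) as [Hp [Hre Him]].
  - rewrite <- Hphase. exact (boundary_phi_sqr D (x0, y) pB HF Hphi).
  - exact Hcos.
  - nra.
  - rewrite <- Hphase. exact (boundary_sqrt_dphi_sqr dphi s D (x0, y) sB pB Hbranch HDS HF Hs Hphi).
  - assert (Hside : 0 <= sigma * c * Re pB).
    { apply (filterlim_Re_scal_nonneg _ phi (sigma * c) pB HF); [| exact Hphi].
      exists (mkposreal (1/2) ltac:(lra)). intros z [Hbx _] Hz.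
      change (Rabs (Re z - x0) < 1/2) in Hbx. apply Rabs_def2 in Hbx.
      destruct (HD z Hz) as [_ Hz0].
      pose proof (cos_mul_re_phi_sign x0 z Hsin) as Hsign. fold c in Hsign.
      pose proof PI_RGT_0.
      destruct Hsigma as [-> | ->].
      + assert (0 < sin (2 * PI * (Re z - x0))) by (apply sin_gt_0; nra). nra.
      + assert (sin (2 * PI * (Re z - x0)) < 0) by (apply sin_lt_0_var; nra). nra. }
    split; [exact Hp | split; [exact Hre |]].
    assert (0 < c * Re pB * Im (sB * sB)) by nra.
    destruct Hsigma as [-> | ->]; nra.
Qed.

Lemma left_boundary_values (dphi s : C -> C) (x0 y : R) (sB pB : C) :
  sqrt_dphi_branch dphi s -> x0 = -1/2 \/ (x0 = 0 /\ y < 0) ->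
  filterlim s (within (side_left x0) (locally ((x0, y) : C))) (locally sB) ->
  filterlim phi (within (side_left x0) (locally ((x0, y) : C))) (locally pB) ->
  Im pB = 0 /\ on_line (PI / 4) sB.
Proof.
  intros Hbranch Hx0 Hs Hphi.
  destruct (boundary_values dphi s (side_left x0) x0 y 1 sB pB) as [Hp [Hre Him]];
    try assumption; try tauto.
  - intros z [Hz Hx]. split; [exact Hz | lra].
  - intros d Hd. unfold side_left, S_slit, Re, Im; simpl. lra.
  - split; [exact Hp | apply on_line_PI4_of_sqr; lra].
Qed.

Lemma right_boundary_values (dphi s : C -> C) (x0 y : R) (sB pB : C) :
  sqrt_dphi_branch dphi s -> x0 = 1/2 \/ (x0 = 0 /\ y < 0) ->
  filterlim s (within (side_right x0) (locally ((x0, y) : C))) (locally sB) ->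
  filterlim phi (within (side_right x0) (locally ((x0, y) : C))) (locally pB) ->
  Im pB = 0 /\ on_line (- (PI / 4)) sB.
Proof.
  intros Hbranch Hx0 Hs Hphi.
  destruct (boundary_values dphi s (side_right x0) x0 y (-1) sB pB) as [Hp [Hre Him]];
    try assumption; try tauto.
  - intros z [Hz Hx]. split; [exact Hz | lra].
  - intros d Hd. unfold side_right, S_slit, Re, Im; simpl. lra.
  - split; [exact Hp | apply on_line_neg_PI4_of_sqr; lra].
Qed.

(** * The boundary integrals *)

Lemma integrands_vanish_real (a1 p1 a2 p2 : C) :
  Im a1 = 0 -> Im p1 = 0 ->
  integrand1 a1 p1 a2 p2 = RtoC 0 /\ integrand2 a1 p1 a2 p2 = RtoC 0.
Proof.
  intros Ha Hp.
  assert (Hreal : forall c : C, Im c = 0 -> Cconj c = c).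
  { intros [u v] Hv. unfold Im in Hv; simpl in Hv. subst v.
    apply injective_projections; simpl; ring. }
  unfold integrand1, integrand2, Koo, Kbo, Kob, Kbb.
  rewrite (Hreal a1 Ha), (Hreal p1 Hp). split; ring.
Qed.

Lemma is_RInt_zero_interior (f : R -> C) (a b : R) :
  (forall y, Rmin a b < y < Rmax a b -> f y = RtoC 0) ->
  @is_RInt C_R_CompleteNormedModule f a b (RtoC 0).
Proof.
  intros Hf. apply (is_RInt_ext (fun _ => RtoC 0)).
  - intros y Hy. symmetry. apply Hf, Hy.
  - pose proof (@is_RInt_const C_R_CompleteNormedModule a b (RtoC 0)) as Hconst.
    match type of Hconst with is_RInt _ _ _ ?I =>
      replace I with (RtoC 0) in Hconst by (rewrite scal_R_Cmult; symmetry; apply Cmult_0_r) end.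
    exact Hconst.
Qed.

Lemma boundary_integrals_vanish (a b : R) (a1 p1 : R -> C) (a2 p2 : C) :
  (forall y, Rmin a b < y < Rmax a b -> Im (a1 y) = 0 /\ Im (p1 y) = 0) ->
  @is_RInt C_R_CompleteNormedModule (fun y => integrand1 (a1 y) (p1 y) a2 p2) a b (RtoC 0) /\
  @is_RInt C_R_CompleteNormedModule (fun y => integrand2 (a1 y) (p1 y) a2 p2) a b (RtoC 0).
Proof.
  intros Hreal.
  split; apply is_RInt_zero_interior; intros y Hy; destruct (Hreal y Hy) as [Ha Hp];
    apply (integrands_vanish_real _ _ a2 p2 Ha Hp).
Qed.

Theorem lemma7p2 :
  forall (dphi s : C -> C), sqrt_dphi_branch dphi s ->
  forall (K1 K2 : C -> C) (z2 : C), S_slit z2 ->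
  (* (a) left boundary *)
  (forall (x0 a b : R) (K1B sB phiB : R -> C),
     left_boundary_seg x0 a b ->
     cont_ext (side_left x0) K1 K1B x0 a b ->
     cont_ext (side_left x0) s sB x0 a b ->
     cont_ext (side_left x0) phi phiB x0 a b ->
     (forall y, in_seg a b y -> on_line (- PI / 4) (K1B y)) ->
     @is_RInt C_R_CompleteNormedModule
       (fun y => integrand1 (Cmult (K1B y) (sB y)) (phiB y)
                            (Cmult (K2 z2) (s z2)) (phi z2)) a b (RtoC 0) /\
     @is_RInt C_R_CompleteNormedModule
       (fun y => integrand2 (Cmult (K1B y) (sB y)) (phiB y)
                            (Cmult (K2 z2) (s z2)) (phi z2)) a b (RtoC 0)) /\
  (* (b) right boundary *)
  (forall (x0 a b : R) (K1B sB phiB : R -> C),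
     right_boundary_seg x0 a b ->
     cont_ext (side_right x0) K1 K1B x0 a b ->
     cont_ext (side_right x0) s sB x0 a b ->
     cont_ext (side_right x0) phi phiB x0 a b ->
     (forall y, in_seg a b y -> on_line (PI / 4) (K1B y)) ->
     @is_RInt C_R_CompleteNormedModule
       (fun y => integrand1 (Cmult (K1B y) (sB y)) (phiB y)
                            (Cmult (K2 z2) (s z2)) (phi z2)) a b (RtoC 0) /\
     @is_RInt C_R_CompleteNormedModule
       (fun y => integrand2 (Cmult (K1B y) (sB y)) (phiB y)
                            (Cmult (K2 z2) (s z2)) (phi z2)) a b (RtoC 0)).
Proof.
  (* The integrands vanish pointwise on the segment. *)
  intros dphi s Hbranch K1 K2 z2 _.
  split; intros x0 a b K1B sB phiB Hseg _ Hs Hphi Hline;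
    apply boundary_integrals_vanish; intros y Hy;
    assert (Hin : in_seg a b y) by (unfold in_seg; lra);
    assert (Hslit : x0 = 0 /\ a < 0 /\ b < 0 -> x0 = 0 /\ y < 0)
      by (intros [? [? ?]]; split; [assumption | pose proof (Rmax_lub_lt a b 0); lra]).
  - unfold left_boundary_seg in Hseg.
    destruct (left_boundary_values dphi s x0 y (sB y) (phiB y) Hbranch) as [Hp Hsq];
      [tauto | apply Hs, Hin | apply Hphi, Hin |].
    split; [| exact Hp].
    apply (on_line_mul_opp_im (- PI / 4)); [apply Hline, Hin |].
    replace (- (- PI / 4)) with (PI / 4) by field. exact Hsq.
  - unfold right_boundary_seg in Hseg.
    destruct (right_boundary_values dphi s x0 y (sB y) (phiB y) Hbranch) as [Hp Hsq];
      [tauto | apply Hs, Hin | apply Hphi, Hin |].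
    split; [| exact Hp].
    exact (on_line_mul_opp_im (PI / 4) _ _ (Hline y Hin) Hsq).
Qed.
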